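(* Let $G$ be a feasible graph of diameter $D$ and election index $\phi$, and let $x\ge \phi$ be an integer given as input to all nodes. Consider the following algorithm Generic$(x)$ executed by every node $u$: in rounds $0,\dots,x-1$ each node sends its current augmented truncated view to all neighbours (so that $u$ learns $\mathcal{B}^x(u)$); then for $r=x,x+1,\dots$, in round $r$ the node sends $\mathcal{B}^r(u)$ to all neighbours and receives theirs, so that it knows $\mathcal{B}=\mathcal{B}^{r+1}(u)$, and computes $X$ = the set of views $\mathcal{B}^x(v)$ for all nodes $v$ at depth at most $r-x$ in $\mathcal{B}$ (these are determined by $\mathcal{B}$) and $Y$ = the set of views $\mathcal{B}^x(v)$ for all nodes $v$ at depth exactly $r-x+1$ in $\mathcal{B}$; it stops iterating at the first $r$ with $Y\subseteq X$. It then lets $\mathcal{B}_{min}$ be the lexicographically smallest view in $X$, lets $W$ be the set of nodes $v$ of smallest depth in $\mathcal{B}$ with $\mathcal{B}^x(v)=\mathcal{B}_{min}$, picks $w\in W$ whose sequence of port numbers from the root is lexicographically smallest, and outputs the sequence of port numbers of the shortest path from the root $u$ to $w$ in $\mathcal{B}$. Then Generic$(x)$ is a correct leader election algorithm in $G$ and works in time at most $D+x+1$.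
   Context: A graph is a simple undirected connected finite graph whose nodes have no identifiers; at each node $v$ of degree $d$ the incident edges carry distinct port numbers $0,\dots,d-1$ (local to each node). The truncated view $\mathcal{V}^0(v)$ is a single node; $\mathcal{V}^{l+1}(v)$ is the port-labelled rooted tree whose root has, for every neighbour $v_i$ of $v$, a child $x_i$ joined by an edge carrying the same two port numbers as $\{v,v_i\}$ (the one at $v$ at the root side), and $x_i$ is the root of a copy of $\mathcal{V}^l(v_i)$. The augmented truncated view $\mathcal{B}^l(v)$ is $\mathcal{V}^l(v)$ with each leaf labelled by the degree in $G$ of the node it represents; augmented truncated views are canonically coded as binary strings and ordered lexicographically by these codes. A graph is feasible if for some $l$ the views $\mathcal{B}^l(v)$ of all nodes are pairwise distinct; its election index is the smallest such $l$. Model (LOCAL): synchronous rounds numbered from 0, all nodes start simultaneously, in each round every node exchanges arbitrary messages with all neighbours and computes arbitrarily. Leader election: every node $v$ outputs a sequence $(p_1,q_1,\dots,p_k,q_k)$ of nonnegative integers describing a simple path starting at $v$ whose $i$-th edge has port $p_i$ at its endpoint closer to $v$ and $q_i$ at the other endpoint; all these paths must end at a common node. Time is the number of rounds until all nodes output. $D$ is the diameter of $G$. *)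

From mathcomp Require Import all_boot.
Set Implicit Arguments. Unset Strict Implicit. Unset Printing Implicit Defensive.

Section Graph.
Variables (V : finType) (adj : rel V) (port : V -> V -> nat).

Definition deg (v : V) : nat := #|[set w | adj v w]|.

Definition port_graph : Prop :=
  [/\ symmetric adj, irreflexive adj, (forall u v, connect adj u v),
      (forall v w, adj v w -> port v w < deg v)
    & (forall v w w', adj v w -> adj v w' -> port v w = port v w' -> w = w')].

Definition nbr (v : V) (i : nat) : option V := [pick w | adj v w & port v w == i].

Definition walk_len (u v : V) (k : nat) : Prop :=
  exists s : seq V, [/\ size s = k, path adj u s & last u s = v].

Definition diameter_of (D : nat) : Prop :=
  (forall u v, exists2 k, k <= D & walk_len u v k) /\
  (exists u v, forall k, walk_len u v k -> D <= k).
End Graph.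

(* A leaf carries the degree of
   the node it represents; an internal node has its children listed in order of
   the port at the parent (child i is reached through port i), each child
   stored together with the port number at the child's side. *)
Inductive view : Type :=
| VLeaf of nat
| VNode of seq (nat * view).

Section Views.
Variables (V : finType) (adj : rel V) (port : V -> V -> nat).

Fixpoint aview (l : nat) (v : V) : view :=
  match l with
  | 0 => VLeaf (deg adj v)
  | l'.+1 =>
      VNode [seq match nbr adj port v i with
                 | Some w => (port w v, aview l' w)
                 | None => (0, VLeaf 0)
                 end | i <- iota 0 (deg adj v)]
  end.

Definition distinct_views (l : nat) : Prop :=
  forall u v, aview l u = aview l v -> u = v.

Definition feasible : Prop := exists l, distinct_views l.

Definition election_index (phi : nat) : Prop :=
  distinct_views phi /\ forall l, distinct_views l -> phi <= l.
End Views.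

(* nodes at depth k of a view tree: (sequence of (port at parent, port at
   child) pairs from the root, subtree rooted at that node) *)
Fixpoint nodes_at (k : nat) (t : view) : seq (seq (nat * nat) * view) :=
  match k with
  | 0 => [:: ([::], t)]
  | k'.+1 =>
      match t with
      | VLeaf _ => [::]
      | VNode cs =>
          flatten [seq [seq ((ic.1, ic.2.1) :: n.1, n.2) | n <- nodes_at k' ic.2.2]
                  | ic <- zip (iota 0 (size cs)) cs]
      end
  end.

(* the view of depth k of the node at the root of t (leaves get labelled
   with the number of children, i.e. the degree) *)
Fixpoint trunc (k : nat) (t : view) : view :=
  match k, t with
  | 0, VLeaf d => VLeaf d
  | 0, VNode cs => VLeaf (size cs)
  | _.+1, VLeaf d => VLeaf d
  | k'.+1, VNode cs => VNode [seq (c.1, trunc k' c.2) | c <- cs]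
  end.

Fixpoint lexle (s t : seq nat) : bool :=
  match s, t with
  | [::], _ => true
  | _ :: _, [::] => false
  | a :: s', b :: t' => (a < b) || ((a == b) && lexle s' t')
  end.

Definition pick_min (T : Type) (le : T -> T -> bool) (d : T) (s : seq T) : T :=
  foldr (fun a b => if le a b then a else b) (head d s) s.

Definition ports_seq (p : seq (nat * nat)) : seq nat :=
  flatten [seq [:: pq.1; pq.2] | pq <- p].

Section Generic.
Variable code : view -> seq bool.  (* canonical binary coding of views *)
Variable x : nat.

Definition code_le (a b : view) : bool :=
  lexle (map nat_of_bool (code a)) (map nat_of_bool (code b)).

Definition Xset (r : nat) (B : view) : seq view :=
  flatten [seq [seq trunc x n.2 | n <- nodes_at d B] | d <- iota 0 (r - x).+1].

Definition Yset (r : nat) (B : view) : seq view :=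
  [seq trunc x n.2 | n <- nodes_at (r - x).+1 B].

Definition stop_cond (r : nat) (B : view) : bool :=
  all (fun y => has (fun z => code z == code y) (Xset r B)) (Yset r B).

Definition Bmin (r : nat) (B : view) : view :=
  pick_min code_le (VLeaf 0) (Xset r B).

Definition Wd (r : nat) (B : view) (d : nat) : seq (seq (nat * nat)) :=
  [seq n.1 | n <- nodes_at d B & code (trunc x n.2) == code (Bmin r B)].

Definition dmin (r : nat) (B : view) : nat :=
  find (fun d => Wd r B d != [::]) (iota 0 (r - x).+1).

Definition output (r : nat) (B : view) : seq nat :=
  ports_seq (pick_min (fun p q => lexle (ports_seq p) (ports_seq q)) [::]
                      (Wd r B (dmin r B))).

Section OnGraph.
Variables (V : finType) (adj : rel V) (port : V -> V -> nat).

(* r is the round at which node u stops iterating: after round r it knows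
   B^{r+1}(u), and r is the first r >= x satisfying Y \subseteq X *)
Definition stop_round (u : V) (r : nat) : Prop :=
  [/\ x <= r, stop_cond r (aview adj port r.+1 u)
    & forall r', x <= r' < r -> ~~ stop_cond r' (aview adj port r'.+1 u)].

Definition generic_output (u : V) (r : nat) : seq nat :=
  output r (aview adj port r.+1 u).
End OnGraph.
End Generic.

Section Paths.
Variables (V : finType) (adj : rel V) (port : V -> V -> nat).

(* the nodes visited when following (p1,q1,...,pk,qk) from v, checking that
   the i-th edge has port p_i at the near end and q_i at the far end *)
Fixpoint trace (v : V) (o : seq nat) : option (seq V) :=
  match o with
  | [::] => Some [::]
  | p :: q :: o' =>
      match nbr adj port v p with
      | Some w => if port w v == q then omap (cons w) (trace w o') else None
      | None => None
      end
  | _ => None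
  end.

Definition describes_path (v : V) (o : seq nat) (l : V) : Prop :=
  exists s, [/\ trace v o = Some s, uniq (v :: s) & last v s = l].
End Paths.

From HB Require Import structures.
From mathcomp Require Import all_boot zify.
Set Implicit Arguments. Unset Strict Implicit. Unset Printing Implicit Defensive.

(* Since x >= phi, the views B^x(v) determine the nodes v.  Hence at round r the set X
   is the set of views of the ball of radius r - x around u, and Y that of the sphere of
   radius r - x + 1, so Y is included in X exactly when the ball is closed under
   adjacency, i.e. is the whole connected graph; this first happens at
   r = x + ecc(u) <= x + D.  At that round X holds the views of all nodes, so B_min is
   the view of one and the same node l for every u, and the nodes of least depth with
   view B_min in B^(r+1)(u) are the ends of shortest walks from u to l, which are simple
   paths. *)

Fixpoint view_nested_ind (P : view -> Prop) (HL : forall n, P (VLeaf n))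
    (HN : forall cs, foldr (fun c Q => P c.2 /\ Q) True cs -> P (VNode cs))
    (v : view) : P v :=
  match v with
  | VLeaf n => HL n
  | VNode cs =>
      HN cs ((fix children cs : foldr (fun c Q => P c.2 /\ Q) True cs :=
                match cs with
                | [::] => I
                | c :: cs' => conj (view_nested_ind HL HN c.2) (children cs')
                end) cs)
  end.

Fixpoint tree_of_view (v : view) : GenTree.tree nat :=
  match v with
  | VLeaf n => GenTree.Leaf n
  | VNode cs => GenTree.Node 0 [seq GenTree.Node c.1 [:: tree_of_view c.2] | c <- cs]
  end.

Fixpoint view_of_tree (t : GenTree.tree nat) : view :=
  match t with
  | GenTree.Leaf n => VLeaf n
  | GenTree.Node _ ts =>
      VNode [seq if t is GenTree.Node k [:: t'] then (k, view_of_tree t') else (0, VLeaf 0)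
            | t <- ts]
  end.

Lemma tree_of_viewK : cancel tree_of_view view_of_tree.
Proof.
elim/view_nested_ind => // cs IH /=; congr VNode.
by elim: cs IH => //= -[k v] cs IHcs [-> /IHcs ->].
Qed.

HB.instance Definition _ := Equality.copy view (can_type tree_of_viewK).

Lemma lexle_trans : transitive lexle.
Proof.
move=> t s; elim: s t => [|a s IHs] [|b t] [|c w] //=.
case: (ltngtP a b) => ab //= le_ts; case: (ltngtP b c) => bc //= le_sw.
- by rewrite (ltn_trans ab bc).
- by rewrite -bc ab.
- by rewrite ab bc.
- by rewrite ab -bc eqxx (IHs _ _ le_ts le_sw) orbT.
Qed.

Lemma lexle_total : total lexle.
Proof. by elim=> [|a s IHs] [|b t] //=; case: ltngtP => //= ->; rewrite eqxx IHs. Qed.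

Lemma lexle_anti s t : lexle s t -> lexle t s -> s = t.
Proof.
elim: s t => [|a s IHs] [|b t] //=.
by case: ltngtP => //= -> le_st le_ts; rewrite (IHs _ le_st le_ts).
Qed.

Lemma code_le_trans code : transitive (code_le code).
Proof. by move=> ? ? ?; apply: lexle_trans. Qed.

Lemma code_le_total code : total (code_le code).
Proof. by move=> ? ?; apply: lexle_total. Qed.

Lemma code_le_anti code : injective code -> antisymmetric (code_le code).
Proof.
move=> code_inj a b /andP[le_ab le_ba].
have nat_of_bool_inj : injective nat_of_bool by do 2!case.
exact/code_inj/(inj_map nat_of_bool_inj)/lexle_anti.
Qed.

Section PickMin.
Variables (T : eqType) (le : rel T).

Lemma foldr_min_mem z s : foldr (fun a b => if le a b then a else b) z s \in z :: s.
Proof.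
elim: s => [|a s IHs] /=; first exact: mem_head.
case: ifP => _; first by rewrite !inE eqxx orbT.
by move: IHs; rewrite !inE => /orP[->|->]; rewrite ?orbT.
Qed.

Lemma pick_min_mem d s : s != [::] -> pick_min le d s \in s.
Proof.
case: s => [//|a s] _; have := foldr_min_mem a (a :: s).
by rewrite /pick_min /= inE => /orP[/eqP->|]; rewrite ?mem_head.
Qed.

Hypotheses (le_trans : transitive le) (le_total : total le).

Lemma foldr_min_le z s y : y \in z :: s ->
  le (foldr (fun a b => if le a b then a else b) z s) y.
Proof.
have le_refl a : le a a by have := le_total a a; rewrite orbb.
elim: s y => [|a s IHs] y; first by rewrite mem_seq1 => /eqP->.
have -> : (y \in z :: a :: s) = (y == a) || (y \in z :: s) by rewrite !inE orbCA.
rewrite /=; set m := foldr _ z s in IHs *.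
case: ifP => [le_am | /negbT nle_am].
  by case/orP => [/eqP-> | /IHs]; [exact: le_refl | exact: le_trans].
have le_ma : le m a by have := le_total a m; rewrite (negPf nle_am).
by case/orP => [/eqP-> | /IHs].
Qed.

Lemma pick_min_le d s y : y \in s -> le (pick_min le d s) y.
Proof. by case: s => [//|a s] y_s; apply: foldr_min_le; rewrite inE y_s orbT. Qed.
End PickMin.

(* A walk no longer than the loop-free walk [shorten] extracted from it is itself loop-free. *)
Lemma shortest_walk_uniq (T : eqType) (e : rel T) u s : path e u s ->
  (forall s', path e u s' -> last u s' = last u s -> size s <= size s') ->
  uniq (u :: s).
Proof.
move=> path_s; case: (shortenP path_s) => s' path_s' uniq_s' sub_s' shortest.
apply: leq_size_uniq uniq_s' _ _.
  by move=> y; rewrite !inE => /orP[->|/sub_s'->]; rewrite ?orbT.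
by rewrite /= ltnS shortest.
Qed.

Section PortGraph.
Variables (V : finType) (adj : rel V) (port : V -> V -> nat).
Hypothesis graphP : port_graph adj port.

Lemma nbr_port v w : adj v w -> nbr adj port v (port v w) = Some w.
Proof.
move=> vw; rewrite /nbr; case: pickP => [w' /andP[vw' /eqP eq_port]|/(_ w)].
  by case: graphP => _ _ _ _ port_inj; rewrite (port_inj _ _ _ vw' vw eq_port).
by rewrite vw eqxx.
Qed.

(* The ports at v inject the deg v neighbours of v into [0, deg v), hence onto it. *)
Lemma nbr_lt_deg v i : i < deg adj v ->
  exists w, [/\ nbr adj port v i = Some w, adj v w & port v w = i].
Proof.
move=> lt_i_deg; case: graphP => _ _ _ port_lt port_inj.
set s := [seq port v w | w <- enum [set w | adj v w]].
have uniq_s : uniq s.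
  rewrite map_inj_in_uniq ?enum_uniq // => w w'.
  by rewrite !mem_enum !inE; apply: port_inj.
have sub_s : {subset s <= iota 0 (deg adj v)}.
  by move=> j /mapP[w]; rewrite mem_enum inE mem_iota add0n => /port_lt ? ->.
have /(uniq_min_size uniq_s sub_s)[_ eq_s] : size (iota 0 (deg adj v)) <= size s.
  by rewrite size_iota size_map -cardE.
have /mapP[w] : i \in s by rewrite eq_s mem_iota.
by rewrite mem_enum inE => vw ->; exists w; rewrite nbr_port.
Qed.

Local Notation av := (aview adj port).

Lemma trunc_aview k l v : k <= l -> trunc k (av l v) = av k v.
Proof.
elim: k l v => [|k IHk] [|l] v //= le_kl; first by rewrite size_map size_iota.
congr VNode; rewrite -map_comp; apply: eq_map => i /=.
by case: nbr => [w|] /=; [rewrite IHk | case: k {IHk le_kl}].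
Qed.

Lemma distinct_views_mono k l : k <= l ->
  distinct_views adj port k -> distinct_views adj port l.
Proof.
move=> le_kl views_k a b eq_ab; apply: views_k.
by rewrite -(trunc_aview a le_kl) eq_ab trunc_aview.
Qed.

Lemma nodes_at_aview_walk d m u n : d <= m -> n \in nodes_at d (av m u) ->
  exists s, [/\ size s = d, path adj u s, n.2 = av (m - d) (last u s)
              & trace adj port u (ports_seq n.1) = Some s].
Proof.
elim: d m u n => [|d IHd] m u n le_dm.
  by rewrite inE => /eqP ->; exists [::]; rewrite subn0.
case: m le_dm => [//|m] le_dm /=.
rewrite size_map size_iota -[X in zip X _]map_id zip_map -map_comp.
case/flattenP => _ /mapP[i + ->] /mapP[n' n'_in ->].
rewrite mem_iota add0n => /nbr_lt_deg[w [nbr_i uw port_i]].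
rewrite /= nbr_i /= in n'_in *.
have [s [<- path_s -> trace_s]] := IHd _ _ _ le_dm n'_in.
by exists (w :: s); rewrite /= uw path_s eqxx -/(ports_seq _) trace_s.
Qed.

Lemma walk_nodes_at_aview u s m : path adj u s -> size s <= m ->
  exists2 n, n \in nodes_at (size s) (av m u) & n.2 = av (m - size s) (last u s).
Proof.
elim: s u m => [|w s IHs] u m; first by exists ([::], av m u); rewrite ?inE ?subn0.
case: m => [//|m] /= /andP[uw path_s] le_sm.
have [n n_in n_view] := IHs _ _ path_s le_sm.
have port_in : port u w \in iota 0 (deg adj u).
  by rewrite mem_iota add0n; case: graphP => _ _ _ port_lt _; apply: port_lt.
exists ((port u w, port w u) :: n.1, n.2); last by rewrite n_view.
rewrite size_map size_iota -[X in zip X _]map_id zip_map -map_comp.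
apply/flattenP; eexists; first exact: map_f port_in.
by rewrite /= (nbr_port uw) /=; apply: map_f.
Qed.

Definition dist_le u v k := exists2 j, j <= k & walk_len adj u v j.

Definition ecc_le u k := forall v, dist_le u v k.

Lemma mem_trunc_nodes_at x d m u z : x + d <= m ->
  z \in [seq trunc x n.2 | n <- nodes_at d (av m u)] <->
  exists2 v, walk_len adj u v d & z = av x v.
Proof.
move=> le_xdm; split.
  case/mapP=> n n_in ->; have [|s [size_s path_s -> _]] := nodes_at_aview_walk _ n_in.
    by lia.
  by exists (last u s); [exists s | rewrite trunc_aview //; lia].
case=> v [s [size_s path_s <-]] ->; rewrite -size_s in le_xdm *.
have [|n n_in view_n] := walk_nodes_at_aview path_s (m := m); first by lia.
by apply/mapP; exists n; rewrite // view_n trunc_aview //; lia.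
Qed.

Variables (code : view -> seq bool) (x : nat).

Lemma mem_Yset r u z : x <= r ->
  z \in Yset x r (av r.+1 u) <-> exists2 v, walk_len adj u v (r - x).+1 & z = av x v.
Proof. by move=> le_xr; apply: mem_trunc_nodes_at; lia. Qed.

Lemma mem_Xset r u z : x <= r ->
  z \in Xset x r (av r.+1 u) <-> exists2 v, dist_le u v (r - x) & z = av x v.
Proof.
move=> le_xr; split.
  case/flattenP=> zs /mapP[d + ->] /mem_trunc_nodes_at; rewrite mem_iota ltnS => le_d.
  by case=> [|v walk_v ->]; [lia | exists v => //; exists d].
case=> v [d le_d walk_v] ->.
have d_in : d \in iota 0 (r - x).+1 by rewrite mem_iota add0n ltnS.
apply/flattenP; eexists; first exact: map_f d_in.
by apply/mem_trunc_nodes_at; [lia | exists v].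
Qed.

Lemma ecc_le_stop_cond r u : x <= r -> ecc_le u (r - x) -> stop_cond code x r (av r.+1 u).
Proof.
move=> le_xr ecc_u; apply/allP => _ /(mem_Yset _ _ le_xr)[v _ ->].
by apply/hasP; exists (av x v) => //; apply/mem_Xset => //; exists v.
Qed.

Hypotheses (code_inj : injective code) (views_inj : distinct_views adj port x).

Lemma stop_cond_ball_closed r u v w : x <= r -> stop_cond code x r (av r.+1 u) ->
  dist_le u v (r - x) -> adj v w -> dist_le u w (r - x).
Proof.
move=> le_xr stop [j le_j [s [size_s path_s last_s]]] vw.
have walk_w : walk_len adj u w j.+1.
  by exists (rcons s w); rewrite size_rcons size_s rcons_path path_s last_s vw last_rcons.
case: (ltnP j (r - x)) => [lt_j | ge_j]; first by exists j.+1.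
have eq_j : j = r - x by apply/eqP; rewrite eqn_leq le_j ge_j.
have w_Y : av x w \in Yset x r (av r.+1 u) by apply/mem_Yset => //; exists w; rewrite -?eq_j.
have /hasP[z z_X /eqP/code_inj eq_z] := allP stop _ w_Y.
by move: z_X; rewrite eq_z => /mem_Xset[// | v' ? /views_inj ->].
Qed.

Lemma stop_cond_ecc_le r u : x <= r -> stop_cond code x r (av r.+1 u) -> ecc_le u (r - x).
Proof.
move=> le_xr stop v; case: graphP => _ _ connected _ _.
case/connectP: (connected u v) => s + ->; elim/last_ind: s => [|s w IHs].
  by exists 0 => //; exists [::].
rewrite rcons_path last_rcons => /andP[/IHs ball_s sw].
exact: stop_cond_ball_closed ball_s sw.
Qed.

Lemma stop_round_exists u D : ecc_le u D ->
  exists2 r, stop_round code x adj port u r & r.+1 <= D + x + 1.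
Proof.
move=> ecc_u.
have stop_D : exists k, stop_cond code x (x + k) (av (x + k).+1 u).
  by exists D; apply: ecc_le_stop_cond; rewrite ?leq_addr ?addKn.
case: (ex_minnP stop_D) => k stop_k min_k.
have le_kD : k <= D by apply/min_k/ecc_le_stop_cond; rewrite ?leq_addr ?addKn.
exists (x + k); last by lia.
split=> [||r /andP[le_xr lt_r]]; rewrite ?leq_addr //.
apply/negP => stop_r.
by have := min_k (r - x); rewrite /= subnKC // => /(_ stop_r); lia.
Qed.

Variable leader : V.
Hypothesis leader_min : forall v, code_le code (av x leader) (av x v).

Section Stopped.
Variables (u : V) (r : nat).
Hypothesis stopped : stop_round code x adj port u r.
Local Notation B := (av r.+1 u).

Lemma Bmin_leader : Bmin code x r B = av x leader.
Proof.
have [le_xr stop _] := stopped.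
have leader_X : av x leader \in Xset x r B.
  by apply/mem_Xset => //; exists leader => //; apply: stop_cond_ecc_le.
have X_neq0 : Xset x r B != [::] by apply/eqP => X0; rewrite X0 in leader_X.
have /mem_Xset[//|v _ min_v] := pick_min_mem (code_le code) (VLeaf 0) X_neq0.
apply: (code_le_anti code_inj); rewrite /Bmin min_v leader_min -min_v andbT.
exact: pick_min_le (@code_le_trans code) (@code_le_total code) _ _ _ leader_X.
Qed.

Lemma mem_Wd_leader d p : d <= r - x -> p \in Wd code x r B d ->
  exists s, [/\ size s = d, path adj u s, last u s = leader
              & trace adj port u (ports_seq p) = Some s].
Proof.
have [le_xr _ _] := stopped.
move=> le_d /mapP[n]; rewrite mem_filter Bmin_leader => /andP[/eqP/code_inj view_n n_in ->].
have [|s [size_s path_s view_s trace_s]] := nodes_at_aview_walk _ n_in; first by lia.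
exists s; split=> //; apply: views_inj.
by rewrite -view_n view_s trunc_aview //; lia.
Qed.

Lemma walk_leader_Wd s : path adj u s -> last u s = leader -> size s <= r - x ->
  Wd code x r B (size s) != [::].
Proof.
have [le_xr _ _] := stopped.
move=> path_s last_s le_s; have [|n n_in view_n] := walk_nodes_at_aview path_s (m := r.+1).
  by lia.
have : n.1 \in Wd code x r B (size s).
  apply: map_f; rewrite mem_filter n_in Bmin_leader view_n last_s trunc_aview ?eqxx //.
  by lia.
by apply: contraTneq => ->.
Qed.

Lemma generic_output_path :
  describes_path adj port u (generic_output code x adj port u r) leader.
Proof.
have [le_xr stop _] := stopped.
set pr := fun d => Wd code x r B d != [::].
have has_pr : has pr (iota 0 (r - x).+1).
  have [j le_j [s [size_s path_s last_s]]] := stop_cond_ecc_le le_xr stop leader.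
  apply/hasP; exists j; first by rewrite mem_iota add0n ltnS.
  by rewrite /pr -size_s walk_leader_Wd // size_s.
have le_dmin : dmin code x r B <= r - x.
  by move: has_pr; rewrite has_find size_iota ltnS.
have pr_dmin : pr (dmin code x r B).
  by have := nth_find 0 has_pr; rewrite nth_iota // add0n.
pose ports_le p q := lexle (ports_seq p) (ports_seq q).
have [s [size_s path_s last_s trace_s]] :=
  mem_Wd_leader le_dmin (pick_min_mem ports_le [::] pr_dmin).
exists s; split=> //; apply: shortest_walk_uniq path_s _ => s' path_s'.
rewrite last_s size_s leqNgt => last_s'; apply/negP => lt_s'.
have := before_find 0 (lt_s' : size s' < find pr _); rewrite nth_iota; last by lia.
by rewrite /pr walk_leader_Wd //; apply: leq_trans (ltnW lt_s') le_dmin.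
Qed.
End Stopped.
End PortGraph.

Theorem lemma1 (V : finType) (adj : rel V) (port : V -> V -> nat)
    (code : view -> seq bool) (D phi x : nat) :
  port_graph adj port ->
  injective code ->
  diameter_of adj D ->
  election_index adj port phi ->
  phi <= x ->
  (* every node stops, and all do so within D + x + 1 rounds *)
  (forall u : V, exists2 r, stop_round code x adj port u r & r.+1 <= D + x + 1) /\
  (* the outputs are simple paths all ending at a common node *)
  (exists l : V, forall (u : V) (r : nat), stop_round code x adj port u r ->
     describes_path adj port u (generic_output code x adj port u r) l).
Proof.
move=> graphP code_inj [ecc_D [u0 _]] [views_phi _] le_phi_x.
have views_x := distinct_views_mono le_phi_x views_phi.
split=> [u | ]; first exact: stop_round_exists graphP code x u D (ecc_D u).
pose view_le a b := code_le code (aview adj port x a) (aview adj port x b).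
have view_le_trans : transitive view_le by move=> ? ? ?; apply: code_le_trans.
have view_le_total : total view_le by move=> ? ?; apply: code_le_total.
exists (pick_min view_le u0 (enum V)) => u r.
apply: (generic_output_path graphP code_inj views_x) => v.
by apply: (pick_min_le view_le_trans view_le_total); rewrite mem_enum.
Qed.
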